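(* Let $p,q,p',q'\in(0,1/2)$, suppose $K_{pq}$ and $K_{p'q'}$ are twofold Cantor sets, and let $f:K_{pq}\to K_{p'q'}$ be a homeomorphism with $f(S_i(x))=S_i'(f(x))$ for all $x\in K_{pq}$ and $i\in\{1,2,3,4\}$. Then $f$ extends to a homeomorphism $\tilde f:\mathbb C\to\mathbb C$. Moreover, if some such extension $\tilde f$ satisfies $\tilde f\circ S_i(z)=S_i'\circ\tilde f(z)$ for all $z\in\mathbb C$ and all $i\in\{1,2,3,4\}$, then $(p,q)=(p',q')$.
   Context: For $p,q\in(0,1/2)$ let $S_1(z)=pz$, $S_2(z)=qz$, $S_3(z)=pz+1-p$, $S_4(z)=qz+1-q$ (maps of $\mathbb R$, also regarded as maps of $\mathbb C$ by the same formulas), let $K_{pq}\subset\mathbb R\subset\mathbb C$ be the attractor of $\{S_1,S_2,S_3,S_4\}$ (the unique nonempty compact $K$ with $K=\bigcup_{i=1}^4S_i(K)$), and let $A=S_3(K_{pq})\cup S_4(K_{pq})$. $K_{pq}$ is called a twofold Cantor set if $S_1^m(A)\cap S_2^n(A)=\varnothing$ for all $m,n\in\mathbb N$. The maps $S_i'$ are defined in the same way with $p',q'$ in place of $p,q$. *)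

(* R : realType; the complex plane C is modelled as R * R
   (product topology = Euclidean topology), z = (Re z, Im z). *)
From mathcomp Require Import all_boot all_order all_algebra.
From mathcomp Require Import all_classical all_reals all_analysis.
Set Implicit Arguments. Unset Strict Implicit. Unset Printing Implicit Defensive.
Import Order.TTheory GRing.Theory Num.Theory.
Import numFieldNormedType.Exports.
Local Open Scope classical_set_scope.
Local Open Scope ring_scope.

(* The four maps S_1..S_4 on the real line, indexed by i : 'I_4 (i = 0,1,2,3 <-> S_1..S_4). *)
Definition Smap {R : realType} (p q : R) (i : 'I_4) (x : R) : R :=
  match val i with
  | 0 => p * x
  | 1 => q * x
  | 2 => p * x + 1 - p
  | _ => q * x + 1 - q
  end.

Definition SmapC {R : realType} (p q : R) (i : 'I_4) (z : R * R) : R * R :=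
  match val i with
  | 0 => (p * z.1, p * z.2)
  | 1 => (q * z.1, q * z.2)
  | 2 => (p * z.1 + 1 - p, p * z.2)
  | _ => (q * z.1 + 1 - q, q * z.2)
  end.

Definition is_attractor {R : realType} (p q : R) (K : set R) : Prop :=
  K !=set0 /\ compact K /\ K = \bigcup_(i in [set: 'I_4]) (Smap p q i @` K).

Definition Aset {R : realType} (p q : R) (K : set R) : set R :=
  (Smap p q (inord 2) @` K) `|` (Smap p q (inord 3) @` K).

Definition twofold {R : realType} (p q : R) (K : set R) : Prop :=
  forall m n : nat, (0 < m)%N -> (0 < n)%N ->
    (iter m (Smap p q (inord 0)) @` Aset p q K)
      `&` (iter n (Smap p q (inord 1)) @` Aset p q K) = set0.

Definition homeo_on {T U : topologicalType} (A : set T) (B : set U) (f : T -> U) : Prop :=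
  exists g : U -> T,
    (forall x, A x -> B (f x)) /\ (forall y, B y -> A (g y)) /\
    (forall x, A x -> g (f x) = x) /\ (forall y, B y -> f (g y) = y) /\
    {within A, continuous f} /\ {within B, continuous g}.

From mathcomp Require Import all_boot all_order all_algebra.
From mathcomp Require Import all_classical all_reals all_analysis.
From mathcomp Require Import ring lra.
Set Implicit Arguments.
Unset Strict Implicit.
Unset Printing Implicit Defensive.

Import Order.TTheory GRing.Theory Num.Theory.
Import numFieldNormedType.Exports.
Local Open Scope classical_set_scope.
Local Open Scope ring_scope.

(* Extension: if phi extends f and psi extends f^-1 to continuous maps of the
   line (Tietze), then (x, y) |-> (y + phi x, x - psi (y + phi x)), a shear
   followed by a swap and a second shear, is a homeomorphism of the plane with
   inverse of the same shape (phi and psi exchanged) that sends (x, 0) to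
   (f x, 0) on K.  This uses only that f is a homeomorphism between compact
   subsets of the line.
   Rigidity: a continuous F conjugating S_1 and S_3 to S'_1 and S'_3 fixes 0
   and 1, and conjugates the translation by p^k (1 - p) to the translation by
   p'^k (1 - p'), so F (n p^k (1 - p)) = n p'^k (1 - p').  Taking n with
   n p^k (1 - p) -> 1, continuity gives F 1 = 0 if p' < p; hence p <= p', and
   p' <= p by applying the same to F^-1. *)

Lemma homeo_onTP {T U : topologicalType} (f : T -> U) :
  homeo_on [set: T] [set: U] f <->
  exists g : U -> T, [/\ continuous f, continuous g, cancel f g & cancel g f].
Proof.
split.
  case=> g [_ [_ [gf [fg [cf cg]]]]]; exists g; split.
  - exact/continuous_subspace_setT.
  - exact/continuous_subspace_setT.
  - by move=> x; apply: gf.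
  - by move=> y; apply: fg.
move=> [g] [cf cg fK gK]; exists g; split=> //; split=> //.
split; first by move=> x _; apply: fK.
split; first by move=> y _; apply: gK.
by split; apply: continuous_subspaceT.
Qed.

Lemma compact_continuous_extension {R : realType} (K : set R) (f : R -> R) :
  compact K -> {within K, continuous f} ->
  exists2 g : R -> R, continuous g & {in K, f =1 g}.
Proof.
move=> cK cf.
have [M M0 fKM] := ex_strict_bound_gt0 (compact_bounded (continuous_compact cf cK)).
have clK : closed K by apply: compact_closed => //; exact: hausdorff_space.
have [|g [fg cg _]] := continuous_bounded_extension pseudometric_normal clK M0 cf.
  by move=> x Kx; apply/ltW/fKM; exists x.
by exists g.
Qed.

Section Klee.
Variable R : realType.

Definition shear (phi : R -> R) (z : R * R) : R * R := (z.1, z.2 + phi z.1).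

Lemma continuous_shear (phi : R -> R) : continuous phi -> continuous (shear phi).
Proof.
move=> cphi z.
apply: (@cvg_pair _ _ _ _ (nbhs z.1) (nbhs (z.2 + phi z.1))); first exact: cvg_fst.
apply: cvgD; first exact: cvg_snd.
exact: (continuous_comp cvg_fst (cphi _)).
Qed.

Definition klee_map (phi psi : R -> R) : R * R -> R * R :=
  shear (fun x => - psi x) \o unstable.swap \o shear phi.

Lemma klee_mapK (phi psi : R -> R) : cancel (klee_map phi psi) (klee_map psi phi).
Proof. by case=> x y; rewrite /klee_map /shear /= subrK addrK. Qed.

Lemma continuous_klee_map (phi psi : R -> R) :
  continuous phi -> continuous psi -> continuous (klee_map phi psi).
Proof.
move=> cphi cpsi z; apply: continuous_comp; first exact: continuous_shear.
apply: continuous_comp; first exact: swap_continuous.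
by apply: continuous_shear => x; apply: cvgN; apply: cpsi.
Qed.

Lemma homeo_klee_map (phi psi : R -> R) : continuous phi -> continuous psi ->
  homeo_on [set: R * R] [set: R * R] (klee_map phi psi).
Proof.
move=> cphi cpsi; apply/homeo_onTP; exists (klee_map psi phi).
by split; [exact: continuous_klee_map|exact: continuous_klee_map|exact: klee_mapK|exact: klee_mapK].
Qed.

Lemma klee_map_axis (phi psi : R -> R) (x : R) :
  psi (phi x) = x -> klee_map phi psi (x, 0) = (phi x, 0).
Proof. by move=> phiK; rewrite /klee_map /shear /= add0r phiK subrr. Qed.

End Klee.

Lemma truncn_inv_mul_cvg {R : realType} (t : nat -> R) :
  (forall k, 0 < t k) -> t @ \oo --> 0 ->
  (fun k => (Num.truncn (t k)^-1)%:R * t k) @ \oo --> (1 : R).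
Proof.
move=> t_gt0 t0; apply: (@squeeze_cvgr _ _ _ _ (fun k => 1 - t k) (fun=> 1)).
- apply: nearW => k; have tk := t_gt0 k.
  have /andP[lo hi] : (Num.truncn (t k)^-1)%:R <= (t k)^-1 < (Num.truncn (t k)^-1).+1%:R.
    by apply: truncn_itv; rewrite invr_ge0 ltW.
  rewrite -(ler_pM2r tk) mulVf ?gt_eqF // in lo.
  rewrite -(ltr_pM2r tk) mulVf ?gt_eqF // -natr1 mulrDl mul1r in hi.
  by rewrite lo andbT lerBlDr ltW.
- by rewrite -[X in _ --> X]subr0; apply: cvgB => //; exact: cvg_cst.
- exact: cvg_cst.
Qed.

Lemma affine_fixed_point {K : fieldType} {U : lmodType K} (s : K) (u c : U) :
  s != 1 -> u = s *: u + (1 - s) *: c -> u = c.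
Proof.
move=> s1 /eqP; rewrite addrC -subr_eq -[X in X - _]scale1r -scalerBl => /eqP.
by move/scalerI; apply; rewrite subr_eq0 eq_sym.
Qed.

Section conjugate_contractions.
Variables (R : realType) (V W : normedModType R).
Variables (F : V -> W) (r r' : R) (c : V) (c' : W).
Hypotheses (r_gt0 : 0 < r) (r_lt1 : r < 1) (r'_gt0 : 0 < r') (r'_lt1 : r' < 1).
Hypothesis F_scale : forall v, F (r *: v) = r' *: F v.
Hypothesis F_affine : forall v, F (r *: v + (1 - r) *: c) = r' *: F v + (1 - r') *: c'.

Lemma conj_fix0 : F 0 = 0.
Proof.
apply: (@affine_fixed_point _ _ r'); first by rewrite lt_eqF.
by rewrite scaler0 addr0 -F_scale scaler0.
Qed.

Lemma conj_fix : F c = c'.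
Proof.
apply: (@affine_fixed_point _ _ r'); first by rewrite lt_eqF.
by rewrite -F_affine -scalerDl addrC subrK scale1r.
Qed.

Lemma conj_shift k v :
  F (v + (r ^+ k * (1 - r)) *: c) = F v + (r' ^+ k * (1 - r')) *: c'.
Proof.
have rV (v' : V) : v' = r *: (r^-1 *: v') by rewrite scalerA mulfV ?gt_eqF ?scale1r.
elim: k v => [|k IHk] v.
  by rewrite !expr0 !mul1r [in LHS](rV v) F_affine -F_scale -rV.
rewrite [in LHS](rV v) exprS -mulrA -scalerA -scalerDr F_scale IHk.
by rewrite scalerDr scalerA mulrA -exprS -F_scale -rV.
Qed.

Lemma conj_multiple k n :
  F ((n%:R * (r ^+ k * (1 - r))) *: c) = (n%:R * (r' ^+ k * (1 - r'))) *: c'.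
Proof.
elim: n => [|n IHn]; first by rewrite !mul0r !scale0r conj_fix0.
by rewrite mulrSr !mulrDl !mul1r scalerDl conj_shift IHn scalerDl.
Qed.

Lemma conj_ratio_le : continuous F -> c' != 0 -> r <= r'.
Proof.
move=> cF c'0; rewrite leNgt; apply/negP => r'r.
pose t k := r ^+ k * (1 - r).
pose n k := Num.truncn (t k)^-1.
have t_gt0 k : 0 < t k by rewrite mulr_gt0 ?exprn_gt0 ?subr_gt0.
have nt1 : (fun k => (n k)%:R * t k) @ \oo --> (1 : R).
  apply: truncn_inv_mul_cvg => //.
  rewrite -(mul0r (1 - r)); apply: cvgM (cvg_cst _); apply: cvg_expr.
  by rewrite ger0_norm ?ltW.
have Fn k : F (((n k)%:R * t k) *: c) =
    ((n k)%:R * t k * ((1 - r') / (1 - r) * (r' / r) ^+ k)) *: c'.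
  rewrite conj_multiple /t; congr (_ *: _).
  by rewrite expr_div_n; field; rewrite ?expf_neq0 ?gt_eqF ?subr_gt0.
have to_c' : (fun k => F (((n k)%:R * t k) *: c)) @ \oo --> c'.
  rewrite -conj_fix -[X in F X](scale1r c).
  by apply: (continuous_cvg _ (cF _)); apply: cvgZ nt1 (cvg_cst _).
have ratio0 : (fun k => (1 - r') / (1 - r) * (r' / r) ^+ k) @ \oo --> (0 : R).
  rewrite -(mulr0 ((1 - r') / (1 - r))); apply: cvgM (cvg_cst _) _; apply: cvg_expr.
  by rewrite ger0_norm ?divr_ge0 ?ltW // ltr_pdivrMr // mul1r.
have to_0 : (fun k => F (((n k)%:R * t k) *: c)) @ \oo --> (0 : W).
  under eq_fun do rewrite Fn.
  rewrite -(scale0r c') -(mulr0 1); apply: cvgZ (cvg_cst _).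
  exact: cvgM nt1 ratio0.
have c'E : c' = 0 := cvg_unique (@norm_hausdorff _ _) to_c' to_0.
by rewrite c'E eqxx in c'0.
Qed.

End conjugate_contractions.

Section SmapC.
Variable R : realType.

Lemma SmapCE (p q : R) (z : R * R) :
  [/\ SmapC p q (inord 0) z = p *: z, SmapC p q (inord 1) z = q *: z,
      SmapC p q (inord 2) z = p *: z + (1 - p) *: (1, 0)
    & SmapC p q (inord 3) z = q *: z + (1 - q) *: (1, 0)].
Proof.
rewrite /SmapC /= !inordK //; split => //.
  by transitivity (p * z.1 + (1 - p) * 1, p * z.2 + (1 - p) * 0);
    rewrite // mulr1 mulr0 addr0 addrA.
by transitivity (q * z.1 + (1 - q) * 1, q * z.2 + (1 - q) * 0);
  rewrite // mulr1 mulr0 addr0 addrA.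
Qed.

Lemma SmapC_conj_le (p q p' q' : R) (F : R * R -> R * R) :
  0 < p < 1 -> 0 < q < 1 -> 0 < p' < 1 -> 0 < q' < 1 -> continuous F ->
  (forall z i, F (SmapC p q i z) = SmapC p' q' i (F z)) ->
  p <= p' /\ q <= q'.
Proof.
move=> /andP[p0 p1] /andP[q0 q1] /andP[p'0 p'1] /andP[q'0 q'1] cF FS.
have e1 : (1, 0) != 0 :> R * R by apply/eqP => -[/eqP]; rewrite oner_eq0.
split.
  apply: (@conj_ratio_le _ _ _ F _ _ (1, 0) (1, 0)) => // z.
  - by have [<- _ _ _] := SmapCE p q z; have [<- _ _ _] := SmapCE p' q' (F z).
  - by have [_ _ <- _] := SmapCE p q z; have [_ _ <- _] := SmapCE p' q' (F z).
apply: (@conj_ratio_le _ _ _ F _ _ (1, 0) (1, 0)) => // z.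
- by have [_ <- _ _] := SmapCE p q z; have [_ <- _ _] := SmapCE p' q' (F z).
- by have [_ _ _ <-] := SmapCE p q z; have [_ _ _ <-] := SmapCE p' q' (F z).
Qed.

End SmapC.

Theorem theorem12 (R : realType) (p q p' q' : R) (K K' : set R) (f : R -> R) :
  0 < p < 2^-1 -> 0 < q < 2^-1 -> 0 < p' < 2^-1 -> 0 < q' < 2^-1 ->
  is_attractor p q K -> is_attractor p' q' K' ->
  twofold p q K -> twofold p' q' K' ->
  homeo_on K K' f ->
  (forall x i, K x -> f (Smap p q i x) = Smap p' q' i (f x)) ->
  (exists F : R * R -> R * R,
      homeo_on [set: R * R] [set: R * R] F /\
      forall x, K x -> F (x, 0) = (f x, 0)) /\
  (forall F : R * R -> R * R,
      homeo_on [set: R * R] [set: R * R] F ->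
      (forall x, K x -> F (x, 0) = (f x, 0)) ->
      (forall z i, F (SmapC p q i z) = SmapC p' q' i (F z)) ->
      p = p' /\ q = q').
Proof.
move=> hp hq hp' hq' [_ [cK _]] [_ [cK' _]] _ _ [g [fK [gK [gf [_ [cf cg]]]]]] _.
split.
  have [phi cphi fphi] := compact_continuous_extension cK cf.
  have [psi cpsi gpsi] := compact_continuous_extension cK' cg.
  exists (klee_map phi psi); split; first exact: homeo_klee_map.
  move=> x Kx; rewrite fphi ?inE // klee_map_axis // -fphi ?inE //.
  by rewrite -gpsi ?inE; [exact: gf | exact: fK].
move=> F /homeo_onTP [G [cF cG FK GK]] _ FS.
have GS z i : G (SmapC p' q' i z) = SmapC p q i (G z) by rewrite -{1}(GK z) -FS FK.
have lt1 (x : R) : 0 < x < 2^-1 -> 0 < x < 1.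
  by case/andP => x0 x2; rewrite x0 /=; lra.
have [pp' qq'] := SmapC_conj_le (lt1 _ hp) (lt1 _ hq) (lt1 _ hp') (lt1 _ hq') cF FS.
have [p'p q'q] := SmapC_conj_le (lt1 _ hp') (lt1 _ hq') (lt1 _ hp) (lt1 _ hq) cG GS.
by split; apply/le_anti; rewrite ?pp' ?p'p ?qq' ?q'q.
Qed.
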